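(* Assume the setting in the context. Let $x_i, x_j, x_{k_1},\dots,x_{k_m}\in X$ be distinct and $K=\{x_{k_1},\dots,x_{k_m}\}$. Suppose that: (a) for every $q=1,\dots,m$: for all $M\subseteq X\setminus\{x_i,x_{k_q}\}$, $N\subseteq X\setminus\{x_j,x_{k_q}\}$ and $G_1,G_2\in\mathcal G$, $x_i-G_1(M)\not\perp\!\!\!\perp x_j-G_2(N)$; and (d) there exist $Q_1,Q_2\subseteq K$ with $Q_1\cup Q_2=K$, $G_1,G_2\in\mathcal G$ and $M,N\subseteq X\setminus(\{x_i,x_j\}\cup K)$ such that $x_i-G_1(M\cup Q_1)\perp\!\!\!\perp x_j-G_2(N\cup Q_2)$. Then $(x_i,x_j)$ is a visible non-edge (w.r.t. $X$), and each $x_{k_q}$ is a parent of $x_i$ or a parent of $x_j$.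
   Context: Model: $X$ is a finite set of observed random variables and $U$ a finite set of unobserved random variables; $V=X\cup U$ and $G=(V,E)$ is a DAG on $V$. Each $v_i\in V$ satisfies $v_i=\sum_{x_j\in \mathrm{pa}(v_i)\cap X} f^{(i)}_j(x_j)+\sum_{u_k\in\mathrm{pa}(v_i)\cap U} f^{(i)}_k(u_k)+n_i$, where the $f$'s are nonlinear functions and the external noises $n_i$ are jointly independent. ''Parent'', ''ancestor'', ''path'', ''d-separation'' refer to $G$ (a path has distinct vertices). Causal Faithfulness Condition (CFC): any conditional independence among variables of $V$ that is not entailed by d-separation in $G$ does not hold. $\perp\!\!\!\perp$ denotes statistical independence, $\not\perp\!\!\!\perp$ dependence. Function class: $\mathcal G$ is a class of generalized additive functions: for $G\in\mathcal G$ and a set $M$ of observed variables, $G(M)=\sum_{x_m\in M} g_m(x_m)$ (with $G(\emptyset)=0$). It satisfies: for any $x_i,x_j\in X$, sets $M,N\subseteq X$, $G_1,G_2\in\mathcal G$ and external noise $n_k$, if $n_k\not\perp\!\!\!\perp x_i-G_1(M)$ and $n_k\not\perp\!\!\!\perp x_j-G_2(N)$ then $x_i-G_1(M)\not\perp\!\!\!\perp x_j-G_2(N)$. Definitions, for $X'\subseteq X$ and $x_i,x_j\in X'$: an unobserved causal path (UCP) from $x_i$ to $x_j$ w.r.t. $X'$ is a directed path $x_i\to\cdots\to v_k\to x_j$ in $G$ with $v_k\notin X'$; an unobserved backdoor path (UBP) between $x_i$ and $x_j$ w.r.t. $X'$ is a path $x_i\leftarrow v_k\leftarrow\cdots\leftarrow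 v\to\cdots\to v_l\to x_j$ with $v_k,v_l\notin X'$ (allowing $v=v_k$, $v=v_l$, or $v=v_k=v_l$; $v$ may be in $X'$). ''UBP/UCP between $x_i$ and $x_j$'' means a UBP or a UCP in either direction. $x_j$ is a visible parent of $x_i$ w.r.t. $X'$ if $x_j$ is a parent of $x_i$ and there is no UBP/UCP between them w.r.t. $X'$; $(x_i,x_j)$ is a visible non-edge w.r.t. $X'$ if there is no edge between them and no UBP/UCP between them w.r.t. $X'$; $(x_i,x_j)$ is invisible w.r.t. $X'$ if there is a UBP/UCP between them w.r.t. $X'$. When $X'$ is omitted, $X'=X$. Standing facts (taken as known), for $X'\subseteq X$ and distinct $x_i,x_j\in X'$: (F1) $x_j$ is a visible parent of $x_i$ w.r.t. $X'$ iff [for all $G_1,G_2\in\mathcal G$, $M\subseteq X'\setminus\{x_i,x_j\}$, $N\subseteq X'\setminus\{x_j\}$: $x_i-G_1(M)\not\perp\!\!\!\perp x_j-G_2(N)$] and [there exist $G_1,G_2\in\mathcal G$, $M\subseteq X'\setminus\{x_i\}$, $N\subseteq X'\setminus\{x_i,x_j\}$ with $x_i-G_1(M)\perp\!\!\!\perp x_j-G_2(N)$]. (F2) $(x_i,x_j)$ is a visible non-edge w.r.t. $X'$ iff there exist $G_1,G_2\in\mathcal G$ and $M,N\subseteq X'\setminus\{x_i,x_j\}$ with $x_i-G_1(M)\perp\!\!\!\perp x_j-G_2(N)$. (F3) $(x_i,x_j)$ is invisible w.r.t. $X'$ iff for all $M\subseteq X'\setminus\{x_i\}$, $N\subseteq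 X'\setminus\{x_j\}$, $G_1,G_2\in\mathcal G$: $x_i-G_1(M)\not\perp\!\!\!\perp x_j-G_2(N)$. *)

From HB Require Import structures.
From mathcomp Require Import all_boot all_order all_algebra.
From mathcomp Require Import all_classical all_reals all_analysis.
Set Implicit Arguments. Unset Strict Implicit. Unset Printing Implicit Defensive.
Import Order.TTheory GRing.Theory Num.Theory.
Local Open Scope classical_set_scope.
Local Open Scope ring_scope.

(* Graph-theoretic notions on a DAG G = (V, E); E u v means u -> v.   *)
Section Graph.
Context {V : finType} (E : rel V).

Definition acyclic : Prop := forall u v : V, E u v -> ~~ connect E v u.

Definition adj : rel V := fun a b => E a b || E b a.

(* [a :: s] is a directed path (a -> s_1 -> ... -> b) with at least one
   edge, ending in b, whose penultimate vertex is NOT in X'. *)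
Definition dpath_pen (X' : {set V}) (a : V) (s : seq V) (b : V) : Prop :=
  [/\ path E a s, last a s = b, s != [::] & last a (belast a s) \notin X'].

(* unobserved causal path from xi to xj w.r.t. X' :
   xi -> ... -> vk -> xj, distinct vertices, vk \notin X'. *)
Definition UCP (X' : {set V}) (xi xj : V) : Prop :=
  exists s, dpath_pen X' xi s xj /\ uniq (xi :: s).

(* unobserved backdoor path between xi and xj w.r.t. X' :
   xi <- vk <- ... <- v -> ... -> vl -> xj, distinct vertices,
   vk, vl \notin X' (v = vk, v = vl allowed). *)
Definition UBP (X' : {set V}) (xi xj : V) : Prop :=
  exists v s1 s2, [/\ dpath_pen X' v s1 xi, dpath_pen X' v s2 xj
                    & uniq (v :: s1 ++ s2)].

Definition invisible (X' : {set V}) (xi xj : V) : Prop :=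
  [\/ UBP X' xi xj, UBP X' xj xi, UCP X' xi xj | UCP X' xj xi].

Definition visible_parent (X' : {set V}) (xi xj : V) : Prop :=
  E xj xi /\ ~ invisible X' xi xj.

Definition visible_nonedge (X' : {set V}) (xi xj : V) : Prop :=
  [/\ ~~ E xi xj, ~~ E xj xi & ~ invisible X' xi xj].

Fixpoint triples (s : seq V) : seq (V * V * V) :=
  match s with
  | a :: ((b :: c :: _) as t) => (a, b, c) :: triples t
  | _ => [::]
  end.

Definition active (Z : {set V}) (p : seq V) : bool :=
  all (fun t : V * V * V => let: (u, w, x) := t in
         if E u w && E x w then [exists d in Z, connect E w d]
         else w \notin Z) (triples p).

Definition dsep (A B Z : {set V}) : Prop :=
  forall a b (s : seq V), a \in A -> b \in B ->
    uniq (a :: s) -> path adj a s -> last a s = b -> ~~ active Z (a :: s).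

End Graph.

Section Prob.
Context {R : realType} {d : measure_display} {T : measurableType d}
        (P : probability T R).

Definition indep (Y Z : T -> R) : Prop :=
  forall A B : set R, measurable A -> measurable B ->
    P (Y @^-1` A `&` Z @^-1` B) = (P (Y @^-1` A) * P (Z @^-1` B))%E.

Definition mutually_indep {I : finType} (n : I -> T -> R) : Prop :=
  forall B : I -> set R, (forall i, measurable (B i)) ->
    P (\bigcap_(i in [set: I]) (n i @^-1` B i)) =
    (\prod_(i : I) P (n i @^-1` B i))%E.

Context {V : finType} (var : V -> T -> R).

Definition sigma_of (S : {set V}) : set (set T) :=
  smallest (sigma_algebra setT)
    [set A | exists v B, [/\ v \in S, measurable B & A = var v @^-1` B]].

(* conditional independence A _||_ B | C of sets of variables:
   every event of sigma(A) has a conditional probability given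
   sigma(B u C) that admits a sigma(C)-measurable version. *)
Definition cond_indep (A B C : {set V}) : Prop :=
  forall EA, sigma_of A EA ->
    exists h : T -> R,
      [/\ (forall D : set R, measurable D -> sigma_of C (h @^-1` D)),
          (forall t, 0 <= h t <= 1) &
          (forall F, sigma_of (B :|: C) F ->
             P (EA `&` F) = (\int[P]_(t in F) (h t)%:E)%E)].

End Prob.

Definition nonlinear {R : realType} (f : R -> R) : Prop :=
  ~ exists a b : R, forall x, f x = a * x + b.

Definition additive_SEM {R : realType} {d : measure_display}
    {T : measurableType d} (P : probability T R) {V : finType} (E : rel V)
    (var noise : V -> T -> R) (f : V -> V -> R -> R) : Prop :=
  [/\ acyclic E,
      (forall v, measurable_fun setT (var v) /\ measurable_fun setT (noise v)),
      (forall v u, E u v -> measurable_fun setT (f v u) /\ nonlinear (f v u)),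
      (forall v t, var v t = \sum_(u | E u v) f v u (var u t) + noise v t)
    & mutually_indep P noise].

Definition CFC {R : realType} {d : measure_display} {T : measurableType d}
    (P : probability T R) {V : finType} (E : rel V) (var : V -> T -> R) : Prop :=
  forall A B C : {set V}, A :&: B = finset.set0 -> A :&: C = finset.set0 ->
    B :&: C = finset.set0 -> cond_indep P var A B C -> dsep E A B C.

(* G(M) = sum_{m in M} g_m(x_m); residual x_i - G(M) *)
Definition resid {R : realType} {T : Type} {V : finType}
    (var : V -> T -> R) (g : V -> R -> R) (M : {set V}) (i : V) : T -> R :=
  fun t => var i t - \sum_(m in M) g m (var m t).

Definition class_property {R : realType} {d : measure_display}
    {T : measurableType d} (P : probability T R) {V : finType}
    (X : {set V}) (var noise : V -> T -> R) (Gcls : (V -> R -> R) -> Prop)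
    : Prop :=
  (forall g, Gcls g -> forall m, measurable_fun setT (g m)) /\
  forall (xi xj : V) (M N : {set V}) g1 g2 k,
    xi \in X -> xj \in X -> M \subset X -> N \subset X -> Gcls g1 -> Gcls g2 ->
    ~ indep P (noise k) (resid var g1 M xi) ->
    ~ indep P (noise k) (resid var g2 N xj) ->
    ~ indep P (resid var g1 M xi) (resid var g2 N xj).

Definition standing_facts {R : realType} {d : measure_display}
    {T : measurableType d} (P : probability T R) {V : finType} (E : rel V)
    (X : {set V}) (var : V -> T -> R) (Gcls : (V -> R -> R) -> Prop) : Prop :=
  forall (X' : {set V}) (xi xj : V), X' \subset X -> xi \in X' -> xj \in X' ->
    xi != xj ->
    [/\ (* F1 *)
      visible_parent E X' xi xj <->
        ((forall g1 g2 (M N : {set V}), Gcls g1 -> Gcls g2 ->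
            M \subset X' :\: [set xi; xj] -> N \subset X' :\ xj ->
            ~ indep P (resid var g1 M xi) (resid var g2 N xj)) /\
         (exists g1 g2 (M N : {set V}), [/\ Gcls g1, Gcls g2,
            M \subset X' :\ xi, N \subset X' :\: [set xi; xj] &
            indep P (resid var g1 M xi) (resid var g2 N xj)])),
      (* F2 *)
      visible_nonedge E X' xi xj <->
        (exists g1 g2 (M N : {set V}), [/\ Gcls g1, Gcls g2,
            M \subset X' :\: [set xi; xj], N \subset X' :\: [set xi; xj] &
            indep P (resid var g1 M xi) (resid var g2 N xj)])
    & (* F3 *)
      invisible E X' xi xj <->
        (forall g1 g2 (M N : {set V}), Gcls g1 -> Gcls g2 ->
            M \subset X' :\ xi -> N \subset X' :\ xj ->
            ~ indep P (resid var g1 M xi) (resid var g2 N xj))].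

From HB Require Import structures.
From mathcomp Require Import all_boot all_order all_algebra.
From mathcomp Require Import all_classical all_reals all_analysis.
Set Implicit Arguments. Unset Strict Implicit. Unset Printing Implicit Defensive.
Import Order.TTheory GRing.Theory Num.Theory.
Local Open Scope classical_set_scope.
Local Open Scope ring_scope.

(* Hypothesis (d) exhibits independent residuals of x_i and x_j regressed on
   sets avoiding both of them, so (F2) makes (x_i, x_j) a visible non-edge.
   If some k in K were a parent of neither, hypothesis (a) and (F3) would make
   the pair invisible w.r.t. X \ {k}.  The last vertex before x_i (or x_j) on
   the witnessing UBP/UCP lies outside X \ {k}, and it cannot be k, which is
   not a parent; so it lies outside X and the pair is invisible w.r.t. X, a
   contradiction.  Only (F2) and (F3) are used. *)

Lemma path_last_edge (V : finType) (E : rel V) (a : V) (s : seq V) :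
  path E a s -> s != [::] -> E (last a (belast a s)) (last a s).
Proof.
case/lastP: s => [//|p b]; rewrite rcons_path belast_rcons last_rcons /=.
by case/andP.
Qed.

Lemma dpath_pen_setD1 (V : finType) (E : rel V) (X : {set V}) (k a b : V)
    (s : seq V) :
  ~~ E k b -> dpath_pen E (X :\ k) a s b -> dpath_pen E X a s b.
Proof.
move=> Ekb [Hp Hlast Hs Hpen]; split => //.
move: Hpen; rewrite finset.in_setD1 negb_and negbK => /orP [/eqP pen_k|//].
by move: (path_last_edge Hp Hs); rewrite Hlast pen_k (negbTE Ekb).
Qed.

Lemma invisible_setD1 (V : finType) (E : rel V) (X : {set V}) (k xi xj : V) :
  ~~ E k xi -> ~~ E k xj -> invisible E (X :\ k) xi xj -> invisible E X xi xj.
Proof.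
move=> Eki Ekj [[v [s1 [s2 [H1 H2 U]]]]|[v [s1 [s2 [H1 H2 U]]]]|[s [H U]]|[s [H U]]].
- apply: Or41; exists v, s1, s2.
  by split => //; [exact: dpath_pen_setD1 Eki H1 | exact: dpath_pen_setD1 Ekj H2].
- apply: Or42; exists v, s1, s2.
  by split => //; [exact: dpath_pen_setD1 Ekj H1 | exact: dpath_pen_setD1 Eki H2].
- by apply: Or43; exists s; split => //; exact: dpath_pen_setD1 Ekj H.
- by apply: Or44; exists s; split => //; exact: dpath_pen_setD1 Eki H.
Qed.

Lemma setU_subset_setD (V : finType) (X A K M Q : {set V}) :
  [disjoint A & K]%B -> K \subset X -> M \subset X :\: (A :|: K) -> Q \subset K ->
  M :|: Q \subset X :\: A.
Proof.
move=> AK KX MX QK; rewrite finset.subUset; apply/andP; split.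
  by apply: (fintype.subset_trans MX); exact: finset.setDS (finset.subsetUl _ _).
apply/fintype.subsetP => x /(fintype.subsetP QK) xK.
by rewrite finset.in_setD (disjointFl AK xK) (fintype.subsetP KX x xK).
Qed.

Lemma setD1_setD1 (V : finType) (X : {set V}) (x k : V) :
  (X :\ k) :\ x = X :\: [set x; k].
Proof. by apply/setP => y; rewrite !inE negb_or andbA. Qed.

Section StandingFacts.
Variables (R : realType) (d : measure_display) (T : measurableType d).
Variables (P : probability T R) (V : finType) (E : rel V) (X : {set V}).
Variables (var : V -> T -> R) (Gcls : (V -> R -> R) -> Prop).
Hypothesis HF : standing_facts P E X var Gcls.

Lemma visible_nonedge_of_indep (xi xj : V) g1 g2 (M N : {set V}) :
  xi \in X -> xj \in X -> xi != xj -> Gcls g1 -> Gcls g2 ->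
  M \subset X :\: [set xi; xj] -> N \subset X :\: [set xi; xj] ->
  indep P (resid var g1 M xi) (resid var g2 N xj) ->
  visible_nonedge E X xi xj.
Proof.
move=> xiX xjX ij G1 G2 MX NX Hind.
have [_ [_ F2] _] := HF (subxx X) xiX xjX ij.
by apply: F2; exists g1, g2, M, N.
Qed.

Lemma invisible_setD1_of_dep (xi xj k : V) :
  xi \in X -> xj \in X -> xi != xj -> xi != k -> xj != k ->
  (forall g1 g2 (M N : {set V}), Gcls g1 -> Gcls g2 ->
     M \subset X :\: [set xi; k] -> N \subset X :\: [set xj; k] ->
     ~ indep P (resid var g1 M xi) (resid var g2 N xj)) ->
  invisible E (X :\ k) xi xj.
Proof.
move=> xiX xjX ij ik jk Hdep.
have xi' : xi \in X :\ k by rewrite finset.in_setD1 ik.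
have xj' : xj \in X :\ k by rewrite finset.in_setD1 jk.
have [_ _ F3] := HF (subD1set X k) xi' xj' ij.
apply/F3 => g1 g2 M N G1 G2; rewrite !setD1_setD1; exact: Hdep.
Qed.

End StandingFacts.

Theorem lemma6 (R : realType) (d : measure_display) (T : measurableType d)
    (P : probability T R) (V : finType) (E : rel V) (X : {set V})
    (var noise : V -> T -> R) (f : V -> V -> R -> R)
    (Gcls : (V -> R -> R) -> Prop)
    (HSEM : additive_SEM P E var noise f)
    (HCFC : CFC P E var)
    (HG : class_property P X var noise Gcls)
    (HF : standing_facts P E X var Gcls)
    (xi xj : V) (K : {set V})
    (Hxi : xi \in X) (Hxj : xj \in X) (Hij : xi != xj)
    (HK : K \subset X) (HiK : xi \notin K) (HjK : xj \notin K)
    (Ha : forall k, k \in K ->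
       forall g1 g2 (M N : {set V}), Gcls g1 -> Gcls g2 ->
         M \subset X :\: [set xi; k] -> N \subset X :\: [set xj; k] ->
         ~ indep P (resid var g1 M xi) (resid var g2 N xj))
    (Hd : exists (Q1 Q2 : {set V}) g1 g2 (M N : {set V}),
       [/\ [/\ Q1 \subset K, Q2 \subset K & Q1 :|: Q2 = K],
           Gcls g1 /\ Gcls g2,
           M \subset X :\: ([set xi; xj] :|: K),
           N \subset X :\: ([set xi; xj] :|: K) &
           indep P (resid var g1 (M :|: Q1) xi) (resid var g2 (N :|: Q2) xj)]) :
  visible_nonedge E X xi xj /\ (forall k, k \in K -> E k xi || E k xj).
Proof.
have ijK : [disjoint [set xi; xj]%SET & K]%B.
  by rewrite disjoint_subset; apply/fintype.subsetP => x /finset.set2P [] ->; rewrite ssrbool.inE.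
have VN : visible_nonedge E X xi xj.
  case: Hd => Q1 [Q2 [g1 [g2 [M [N [[Q1K Q2K _] [G1 G2] MX NX Hind]]]]]].
  have MQ1 := setU_subset_setD ijK HK MX Q1K.
  have NQ2 := setU_subset_setD ijK HK NX Q2K.
  exact: (visible_nonedge_of_indep HF Hxi Hxj Hij G1 G2 MQ1 NQ2 Hind).
split => // k kK; apply/negPn/negP => /norP [Eki Ekj].
have ik : xi != k by apply: contraNneq HiK => ->.
have jk : xj != k by apply: contraNneq HjK => ->.
have Inv := invisible_setD1_of_dep HF Hxi Hxj Hij ik jk (Ha k kK).
by case: VN => _ _; apply; exact: invisible_setD1 Inv.
Qed.
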